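(* A Cantor set (with any compatible metric) admits a continuous selfmap which is generically chaotic but not generically $\varepsilon$-chaotic for any $\varepsilon>0$.
   Context: For continuous $f$ on a compact metric space $(X,d)$: $(x,y)$ is a Li-Yorke pair if $\liminf_n d(f^n(x),f^n(y))=0<\limsup_n d(f^n(x),f^n(y))$, and an $\varepsilon$-scrambled pair if $\liminf_n d(f^n(x),f^n(y))=0$ and $\limsup_n d(f^n(x),f^n(y))>\varepsilon$; $f$ is generically chaotic (resp. generically $\varepsilon$-chaotic) if the set of Li-Yorke (resp. $\varepsilon$-scrambled) pairs is residual in $X^2$. *)

From HB Require Import structures.
From mathcomp Require Import all_boot all_order all_algebra.
From mathcomp Require Import all_classical all_reals all_analysis.
Set Implicit Arguments. Unset Strict Implicit. Unset Printing Implicit Defensive.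
Import Order.TTheory GRing.Theory Num.Theory.
Local Open Scope classical_set_scope.
Local Open Scope ring_scope.

Definition homeomorphic (S T : topologicalType) : Prop :=
  exists (f : S -> T) (g : T -> S),
    cancel f g /\ cancel g f /\ continuous f /\ continuous g.

Definition residual (T : topologicalType) (A : set T) : Prop :=
  exists U : nat -> set T,
    (forall n, open (U n) /\ dense (U n)) /\ \bigcap_n U n `<=` A.

Definition orbit_dist {R : realType} {T : metricType R} (f : T -> T) (x y : T)
  : nat -> \bar R := fun n => (mdist (iter n f x) (iter n f y))%:E.

Definition LiYorke_pair {R : realType} {T : metricType R} (f : T -> T) (x y : T)
  : Prop :=
  limn_einf (orbit_dist f x y) = 0%E /\ (0 < limn_esup (orbit_dist f x y))%E.

Definition scrambled_pair {R : realType} {T : metricType R} (eps : R)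
  (f : T -> T) (x y : T) : Prop :=
  limn_einf (orbit_dist f x y) = 0%E /\ (eps%:E < limn_esup (orbit_dist f x y))%E.

Definition generically_chaotic {R : realType} {T : metricType R} (f : T -> T)
  : Prop := residual [set p : T * T | LiYorke_pair f p.1 p.2].

Definition generically_eps_chaotic {R : realType} {T : metricType R} (eps : R)
  (f : T -> T) : Prop := residual [set p : T * T | scrambled_pair eps f p.1 p.2].

(* Read a point of the Cantor space as a word of blocks 0^k 1, and a point
   0^k 1 0^j 1 w as a level k, an anchor j and a tape w of further blocks.
   The map [step] consumes one block 0^a 1 of the tape and replaces the level
   by max(k - 1, j + a); points with fewer than three blocks go to 0^ω.  A
   point of level at least L agrees with 0^ω on its first L bits.

   Generic pairs are Li-Yorke: every pair of cylinders contains a pair whose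
   orbits reach 0^ω at the same, arbitrarily late, time, and a pair whose
   first orbit reaches the fixed point 0^j 1 0^j 1 1^ω (on a tape 1^ω of
   empty blocks the level decays to the anchor) while the second is at 0^ω;
   both conditions are open.  The
   separation obtained in this way depends on the anchor j, and no ε works:
   on the nonempty open set of points whose level and anchor are both L, the
   level never drops below L, so all orbits stay close to 0^ω; by Baire, a
   residual set of pairs meets this set.  Everything is transported to T
   along the homeomorphism, the Baire argument being carried out with
   cylinders. *)

From HB Require Import structures.
From mathcomp Require Import all_boot all_order all_algebra.
From mathcomp Require Import all_classical all_reals all_analysis.
From mathcomp Require Import zify lra.
Set Implicit Arguments. Unset Strict Implicit. Unset Printing Implicit Defensive.
Import Order.TTheory GRing.Theory Num.Theory.
Local Open Scope classical_set_scope.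
Local Open Scope ring_scope.

Section Blocks.
Local Open Scope nat_scope.
Implicit Types (x y w : nat -> bool) (s : seq bool).

Definition zeros : nat -> bool := fun=> false.
Definition ones : nat -> bool := fun=> true.

Definition prepend s w : nat -> bool :=
  fun i => if i < size s then nth false s i else w (i - size s).

Definition block (k : nat) : seq bool := rcons (nseq k false) true.

Definition agree (M : nat) x y := forall i, i < M -> x i = y i.

Lemma agree_refl M x : agree M x x.
Proof. by []. Qed.

Lemma agree_sym M x y : agree M x y -> agree M y x.
Proof. by move=> xy i /xy. Qed.

Lemma agree_trans M x y z : agree M x y -> agree M y z -> agree M x z.
Proof. by move=> xy yz i iM; rewrite xy // yz. Qed.

Lemma agree_le M N x y : N <= M -> agree M x y -> agree N x y.
Proof. by move=> NM xy i iN; apply: xy; apply: leq_trans NM. Qed.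

Lemma agree_prepend s M w w' :
  agree M w w' -> agree (size s + M) (prepend s w) (prepend s w').
Proof. by move=> ww' i iM; rewrite /prepend; case: ltnP => // ?; apply: ww'; lia. Qed.

Lemma agree_prependP s M w y : agree (size s + M) (prepend s w) y ->
  exists2 w', y = prepend s w' & agree M w w'.
Proof.
move=> wy; exists (fun i => y (i + size s)).
  apply: funext => i; rewrite /prepend; case: ltnP => [ltis|leis]; last by rewrite subnK.
  by rewrite -wy ?/prepend ?ltis //; lia.
move=> i iM; rewrite -wy; last by lia.
by rewrite /prepend ifF ?addnK //; lia.
Qed.

Lemma size_block k : size (block k) = k.+1.
Proof. by rewrite size_rcons size_nseq. Qed.

Lemma prepend_cat s1 s2 w : prepend (s1 ++ s2) w = prepend s1 (prepend s2 w).
Proof.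
apply: funext => i; rewrite /prepend size_cat nth_cat.
case: (ltnP i (size s1)) => i1; first by rewrite ifT //; lia.
case: (ltnP (i - size s1) (size s2)) => i2; first by rewrite ifT //; lia.
by rewrite ifF ?subnDA //; lia.
Qed.

Lemma prepend_block_lt k w i : i < k -> prepend (block k) w i = false.
Proof.
move=> ik; rewrite /prepend size_block ltnS ltnW // nth_rcons size_nseq ik.
by rewrite nth_nseq ik.
Qed.

Lemma prepend_block_eq k w : prepend (block k) w k = true.
Proof. by rewrite /prepend size_block ltnSn nth_rcons size_nseq ltnn eqxx. Qed.

Lemma prepend_block_ge k w i : prepend (block k) w (i + k.+1) = w i.
Proof. by rewrite /prepend size_block ifF ?addnK //; lia. Qed.

Lemma agree_zeros_block M k w : M <= k -> agree M zeros (prepend (block k) w).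
Proof. by move=> Mk i iM; rewrite prepend_block_lt //; apply: leq_trans iM Mk. Qed.

Lemma agree_zeros_block_le M k w : agree M zeros (prepend (block k) w) -> M <= k.
Proof.
by move=> zw; rewrite leqNgt; apply/negP => /zw; rewrite prepend_block_eq.
Qed.

Variant stream_spec : (nat -> bool) -> Type :=
| StreamZeros : stream_spec zeros
| StreamBlock k w : stream_spec (prepend (block k) w).

Lemma streamP x : stream_spec x.
Proof.
have [ex|nex] := pselect (exists i, x i); last first.
  have -> : x = zeros.
    by apply: funext => i; apply/negbTE/negP => xi; apply: nex; exists i.
  exact: StreamZeros.
case: (ex_minnP ex) => k xk kmin.
suff -> : x = prepend (block k) (fun i => x (i + k.+1)) by apply: StreamBlock.
apply: funext => i; case: (ltngtP i k) => [ik||->]; last by rewrite prepend_block_eq.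
- by rewrite prepend_block_lt //; apply/negbTE/negP => /kmin; rewrite leqNgt ik.
- by move=> ki; rewrite -(subnK ki) prepend_block_ge.
Qed.

Definition head_block x : option (nat * (nat -> bool)) :=
  if pselect (exists i, x i) is left ex then
    Some (ex_minn ex, fun i => x (i + (ex_minn ex).+1))
  else None.

Lemma head_block_prepend k w : head_block (prepend (block k) w) = Some (k, w).
Proof.
rewrite /head_block; case: pselect => [ex|[]]; last by exists k; rewrite prepend_block_eq.
case: ex_minnP => m wm mmin.
have -> : m = k.
  apply/eqP; rewrite eqn_leq mmin ?prepend_block_eq // leqNgt.
  by apply/negP => /(@prepend_block_lt k w); rewrite wm.
by congr (Some (_, _)); apply: funext => i; rewrite prepend_block_ge.
Qed.

Lemma head_block_zeros : head_block zeros = None.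
Proof. by rewrite /head_block; case: pselect => // -[]. Qed.

Lemma prepend_block_inj k k' w w' :
  prepend (block k) w = prepend (block k') w' -> k = k' /\ w = w'.
Proof. by move=> /(congr1 head_block); rewrite !head_block_prepend => -[-> ->]. Qed.

End Blocks.

Section StepMap.
Local Open Scope nat_scope.
Implicit Types (x y w : nat -> bool) (bs : seq nat).

Definition state k j w := prepend (block k) (prepend (block j) w).

Definition step x : nat -> bool :=
  if head_block x is Some (k, x1) then
  if head_block x1 is Some (j, x2) then
  if head_block x2 is Some (a, w) then state (maxn k.-1 (j + a)) j w
  else zeros else zeros else zeros.

Lemma step_state k j a w :
  step (state k j (prepend (block a) w)) = state (maxn k.-1 (j + a)) j w.
Proof. by rewrite /step /state !head_block_prepend. Qed.

Lemma step_zeros : step zeros = zeros.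
Proof. by rewrite /step head_block_zeros. Qed.

Lemma step_block_zeros k : step (prepend (block k) zeros) = zeros.
Proof. by rewrite /step head_block_prepend head_block_zeros. Qed.

Lemma step_state_zeros k j : step (state k j zeros) = zeros.
Proof. by rewrite /step /state !head_block_prepend head_block_zeros. Qed.

Lemma iter_step_zeros n : iter n step zeros = zeros.
Proof. by elim: n => //= n ->; rewrite step_zeros. Qed.

Lemma state_inj k j w k' j' w' :
  state k j w = state k' j' w' -> [/\ k = k', j = j' & w = w'].
Proof. by move=> /prepend_block_inj [-> /prepend_block_inj [-> ->]]. Qed.

Lemma state_neq_zeros k j w : state k j w <> zeros.
Proof. by move=> /(congr1 head_block); rewrite head_block_prepend head_block_zeros. Qed.

Lemma agree_stateP k j w y :
  agree (k.+1 + j.+1) (state k j w) y -> exists w', y = state k j w'.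
Proof.
rewrite /state -prepend_cat -(size_block k) -(size_block j) -size_cat -[X in agree X]addn0.
by move=> /agree_prependP [w' -> _]; exists w'; rewrite prepend_cat.
Qed.

Lemma agree_zeros_step_block L k y : L < k -> agree L zeros (step (prepend (block k) y)).
Proof.
move=> Lk; case: (streamP y) => [|j y1]; first by rewrite step_block_zeros.
case: (streamP y1) => [|a w]; first by rewrite -/(state _ _ _) step_state_zeros.
by rewrite -/(state _ _ _) step_state; apply: agree_zeros_block; lia.
Qed.

Lemma agree_zeros_step_state L k j y : L <= j -> agree L zeros (step (state k j y)).
Proof.
move=> Lj; case: (streamP y) => [|a w]; first by rewrite step_state_zeros.
by rewrite step_state; apply: agree_zeros_block; lia.
Qed.

Lemma step_agree x L : exists M, forall y, agree M x y -> agree L (step x) (step y).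
Proof.
case: (streamP x) => [|k x1].
  exists L.+1 => y; case: (streamP y) => [//|k y1 /agree_zeros_block_le Lk].
  by rewrite step_zeros; apply: agree_zeros_step_block.
case: (streamP x1) => [|j x2].
  exists (size (block k) + L) => y /agree_prependP [y1 ->].
  case: (streamP y1) => [//|j y2 /agree_zeros_block_le Lj].
  by rewrite step_block_zeros -/(state _ _ _); apply: agree_zeros_step_state.
rewrite -/(state _ _ _); case: (streamP x2) => [|a w].
  exists (size (block k) + (size (block j) + L)).
  move=> y /agree_prependP [y1 -> /agree_prependP [y2 ->]].
  case: (streamP y2) => [//|a w' /agree_zeros_block_le La].
  by rewrite -!/(state _ _ _) step_state_zeros step_state; apply: agree_zeros_block; lia.
exists (size (block k) + (size (block j) + (size (block a) + L))).
move=> y /agree_prependP [y1 -> /agree_prependP [y2 -> /agree_prependP [w' -> ww']]].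
rewrite -!/(state _ _ _) !step_state /state.
apply: (agree_le _ (agree_prepend (agree_prepend ww'))); lia.
Qed.

Lemma iter_step_agree n x L :
  exists M, forall y, agree M x y -> agree L (iter n step x) (iter n step y).
Proof.
elim: n L => [|n IH] L; first by exists L.
have [M1 xM1] := step_agree (iter n step x) L.
have [M2 xM2] := IH M1.
by exists M2 => y /xM2 /xM1.
Qed.

Lemma agree_iter_step_zeros m k j w : j <= k -> agree j (iter m step (state k j w)) zeros.
Proof.
elim: m k w => [|m IH] k w jk; first exact/agree_sym/agree_zeros_block.
rewrite iterSr; case: (streamP w) => [|a w']; first by rewrite step_state_zeros iter_step_zeros.
by rewrite step_state; apply: IH; lia.
Qed.

Definition tape bs w := foldr (fun a => prepend (block a)) w bs.
Definition level k j bs := foldl (fun l a => maxn l.-1 (j + a)) k bs.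

Lemma iter_step_tape bs k j w :
  iter (size bs) step (state k j (tape bs w)) = state (level k j bs) j w.
Proof. by elim: bs k => [|a bs IH] k //; rewrite [size _]/= iterSr step_state IH. Qed.

Lemma iter_step_tape_zeros bs k j m :
  size bs < m -> iter m step (state k j (tape bs zeros)) = zeros.
Proof.
move=> bsm; rewrite -(subnK bsm) iterD iterS iter_step_tape step_state_zeros.
exact: iter_step_zeros.
Qed.

Lemma iter_step_ones D l j :
  iter D.+1 step (state l j ones) = state (maxn (l - D.+1) j) j ones.
Proof.
have ones_block0 : ones = prepend (block 0) ones.
  by apply: funext => -[|i] //; rewrite -addn1 prepend_block_ge.
elim: D => [|D IH]; rewrite iterS ?IH {1}ones_block0 step_state addn0; congr state; lia.
Qed.

Lemma iter_step_tape_ones bs k j m : size bs + level k j bs < m ->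
  iter m step (state k j (tape bs ones)) = state j j ones.
Proof.
move=> bsm; have /subnK <- : size bs <= m by lia.
have -> : m - size bs = (m - size bs).-1.+1 by lia.
by rewrite iterD iter_step_tape iter_step_ones; congr state; lia.
Qed.

Lemma prepend_rcons_tape s :
  exists2 bs, count id s < size bs & forall w, prepend (rcons s true) w = tape bs w.
Proof.
elim: s => [|[] s [bs sbs sE]]; first by exists [:: 0].
  by exists (0 :: bs) => [|w]; rewrite /= ?ltnS // -sE -(prepend_cat [:: true]).
case: bs sbs sE => // a bs sbs sE; exists (a.+1 :: bs) => // w.
by rewrite rcons_cons -cat1s prepend_cat sE /= -(prepend_cat [:: false]).
Qed.

Lemma agree_state_tape x P : exists k j bs, forall w, agree P x (state k j (tape bs w)).
Proof.
have [bs] := prepend_rcons_tape (mkseq x P ++ [:: true; true]).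
rewrite count_cat /=; case: bs => [|k [|j bs]] /= sbs; try lia.
move=> xE; exists k, j, bs => w i iP.
by rewrite /state -xE rcons_cat prepend_cat /prepend size_mkseq iP nth_mkseq.
Qed.

End StepMap.

Section Genericity.
Local Open Scope nat_scope.
Implicit Types (x y : nat -> bool) (P : (nat -> bool) -> (nat -> bool) -> Prop).

Definition agree_open P := forall x y, P x y ->
  exists M, forall x' y', agree M x x' -> agree M y y' -> P x' y'.

Definition agree_dense P := forall x y M,
  exists x' y', [/\ agree M x x', agree M y y' & P x' y'].

Definition proximal_at n x y := exists2 m, n <= m &
  agree n (iter m step x) zeros /\ agree n (iter m step y) zeros.

Definition apart_at n x y := exists K J w, x = state K J w /\ exists2 m, n <= m &
  agree n (iter m step x) (state J J ones) /\ agree n (iter m step y) zeros.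

Lemma iter_step_agree2 m n x y : exists M, forall x' y', agree M x x' -> agree M y y' ->
  agree n (iter m step x') (iter m step x) /\ agree n (iter m step y') (iter m step y).
Proof.
have [Mx xMx] := iter_step_agree m x n; have [My yMy] := iter_step_agree m y n.
exists (maxn Mx My) => x' y' xx' yy'; split; apply/agree_sym.
  by apply: xMx; apply: agree_le xx'; apply: leq_maxl.
by apply: yMy; apply: agree_le yy'; apply: leq_maxr.
Qed.

Lemma proximal_at_open n : agree_open (proximal_at n).
Proof.
move=> x y [m nm [xm ym]]; have [M MP] := iter_step_agree2 m n x y.
exists M => x' y' xx' yy'; have [x'm y'm] := MP _ _ xx' yy'.
by exists m => //; split; apply: agree_trans; eassumption.
Qed.

Lemma apart_at_open n : agree_open (apart_at n).
Proof.
move=> x y [K [J [w [xE [m nm [xm ym]]]]]]; have [M MP] := iter_step_agree2 m n x y.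
exists (maxn M (K.+1 + J.+1)) => x' y' xx' yy'.
have [x'm y'm] := MP x' y' (agree_le (leq_maxl _ _) xx') (agree_le (leq_maxl _ _) yy').
have [w' x'E] : exists w', x' = state K J w'.
  by apply: (@agree_stateP _ _ w); rewrite -xE; apply: agree_le xx'; apply: leq_maxr.
by exists K, J, w'; split => //; exists m => //; split; apply: agree_trans; eassumption.
Qed.

Lemma proximal_at_dense n : agree_dense (proximal_at n).
Proof.
move=> x y M; have [k [j [bs xE]]] := agree_state_tape x M.
have [k' [j' [bs' yE]]] := agree_state_tape y M.
exists (state k j (tape bs zeros)), (state k' j' (tape bs' zeros)); split => //.
exists (n + size bs + size bs').+1; first lia.
by rewrite !iter_step_tape_zeros; try lia; split; apply: agree_refl.
Qed.

Lemma apart_at_dense n : agree_dense (apart_at n).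
Proof.
move=> x y M; have [k [j [bs xE]]] := agree_state_tape x M.
have [k' [j' [bs' yE]]] := agree_state_tape y M.
exists (state k j (tape bs ones)), (state k' j' (tape bs' zeros)); split => //.
exists k, j, (tape bs ones); split => //.
exists (n + size bs + level k j bs + size bs').+1; first lia.
by rewrite iter_step_tape_ones ?iter_step_tape_zeros; try lia; split; apply: agree_refl.
Qed.

Lemma agree_chain_limit (x : nat -> nat -> bool) (M : nat -> nat) :
  (forall n, M n < M n.+1) -> (forall n, agree (M n) (x n) (x n.+1)) ->
  exists xi, forall n, agree (M n) (x n) xi.
Proof.
move=> Minc xS.
have le_M n : n <= M n by elim: n => // n IH; apply: leq_ltn_trans IH (Minc n).
pose r (a b : nat * (nat -> bool)) := a.1 <= b.1 /\ agree a.1 a.2 b.2.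
have chain : {homo (fun n => (M n, x n)) : n m / n <= m >-> r n m}.
  apply: homo_leq => [a|b a c [ab abx] [bc bcx]|n]; rewrite /r.
  - by split; last exact: agree_refl.
  - by split; [apply: leq_trans ab bc|apply: agree_trans abx (agree_le ab bcx)].
  - by split; [exact: ltnW (Minc n)|exact: xS].
exists (fun i => x i.+1 i) => n i iM; case: (leqP n i.+1) => [ni|lt_in].
  by have [_] := chain _ _ ni; apply.
by have [_ /(_ i (le_M i.+1))] := chain _ _ (ltnW lt_in).
Qed.

Lemma agree_open_dense_refine P : agree_open P -> agree_dense P -> forall x y M,
  exists x' y' M', [/\ M < M', agree M x x', agree M y y' &
    forall x'' y'', agree M' x' x'' -> agree M' y' y'' -> P x'' y''].
Proof.
move=> oP dP x y M; have [x' [y' [xx' yy' Pxy']]] := dP x y M.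
have [M0 M0P] := oP _ _ Pxy'.
exists x', y', (maxn M0 M.+1); split => // [|x'' y'' x'x'' y'y''].
  exact: leq_maxr.
by apply: M0P; [apply: agree_le x'x''|apply: agree_le y'y'']; apply: leq_maxl.
Qed.

Lemma agree_baire (P : nat -> (nat -> bool) -> (nat -> bool) -> Prop) :
  (forall n, agree_open (P n)) -> (forall n, agree_dense (P n)) ->
  agree_dense (fun x y => forall n, P n x y).
Proof.
move=> oP dP x y M.
pose refines n (s s' : (nat -> bool) * (nat -> bool) * nat) :=
  [/\ s.2 < s'.2, agree s.2 s.1.1 s'.1.1, agree s.2 s.1.2 s'.1.2 &
    forall x'' y'', agree s'.2 s'.1.1 x'' -> agree s'.2 s'.1.2 y'' -> P n x'' y''].
have [next nextP] : {next & forall ns, refines ns.1 ns.2 (next ns)}.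
  apply: (@choice _ _ (fun ns => refines ns.1 ns.2)) => -[n [[x1 y1] M1]].
  have [x' [y' [M' ?]]] := agree_open_dense_refine (oP n) (dP n) x1 y1 M1.
  by exists (x', y', M').
pose fix s n := if n is m.+1 then next (m, s m) else (x, y, M).
have [xi xiP] : exists xi, forall n, agree (s n).2 (s n).1.1 xi.
  by apply: agree_chain_limit => n; have [] := nextP (n, s n).
have [yi yiP] : exists yi, forall n, agree (s n).2 (s n).1.2 yi.
  by apply: agree_chain_limit => n; have [] := nextP (n, s n).
exists xi, yi; split; [exact: xiP 0|exact: yiP 0|move=> n].
by have [_ _ _] := nextP (n, s n); apply; [exact: xiP n.+1|exact: yiP n.+1].
Qed.

End Genericity.

Lemma agree_nbhs (x : cantor_space) M : nbhs x (agree M x).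
Proof.
elim: M => [|M IH]; first by apply: (@filterS _ _ _ setT); [move=> y _ i|exact: filterT].
have xM : nbhs x (proj M @^-1` [set x M]).
  apply: open_nbhs_nbhs; split => //; apply: open_comp; last exact: discrete_open.
  by move=> + _; exact: proj_continuous.
apply: filterS (filterI IH xM) => y [xy yM] i; rewrite ltnS leq_eqVlt => /predU1P [->//|].
exact: xy.
Qed.

(* A subbasic open set of the product topology depends on one coordinate [i]. *)
Lemma cvg_agree (z : nat -> cantor_space) (x : cantor_space) :
  (forall n, agree n (z n) x) -> z @ \oo --> x.
Proof.
move=> zx; apply/cvg_sup => i U [V] [[W] oW <-] WfN WU.
apply: (filterS WU); rewrite nbhs_simpl; exists i.+1 => // n /= iSn.
by rewrite /= zx.
Qed.

Lemma nbhs_agree (x : cantor_space) A : nbhs x A -> exists M, agree M x `<=` A.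
Proof.
move=> xA; apply: contrapT => /forallNP noM.
have /choice [z zP] : forall M, exists z : cantor_space, agree M x z /\ ~ A z.
  by move=> M; have /existsNP [z /not_implyP [xz nAz]] := noM M; exists z.
have /(_ _ xA) [N _ NA] : z @ \oo --> x.
  by apply: cvg_agree => n; apply/agree_sym; have [] := zP n.
by have [_] := zP N; apply; apply: NA => /=.
Qed.

Lemma continuous_agree (X : topologicalType) (g : cantor_space -> X) x A :
  {for x, continuous g} -> nbhs (g x) A -> exists M, forall y, agree M x y -> A (g y).
Proof. by move=> gx /gx /nbhs_agree [M MA]; exists M => y /MA. Qed.

Lemma step_continuous : continuous (step : cantor_space -> cantor_space).
Proof.
move=> x A /nbhs_agree [L LA]; have [M MP] := step_agree x L.
by apply: filterS (agree_nbhs x M) => y /MP /LA.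
Qed.

Section Transfer.
Context {T : topologicalType} (h : T -> cantor_space) (g : cantor_space -> T).
Hypotheses (hK : cancel h g) (gK : cancel g h) (hc : continuous h) (gc : continuous g).

Definition box x y M : set (T * T) := [set p | agree M x (h p.1) /\ agree M y (h p.2)].

Lemma open_box x y M : open (box x y M).
Proof.
rewrite openE => -[a b] [/= xa yb].
exists (h @^-1` agree M (h a), h @^-1` agree M (h b)).
  by split; apply: hc; apply: agree_nbhs.
by move=> [a' b'] [/= aa' bb']; split; apply: agree_trans; eassumption.
Qed.

Lemma box_center x y M : box x y M (g x, g y).
Proof. by rewrite /box /= !gK; split; apply: agree_refl. Qed.

Lemma open_agree_open O : open O -> agree_open (fun x y => O (g x, g y)).
Proof.
rewrite openE => oO x y /oO [[A B] [xA yB] AB].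
have [Mx MxA] := continuous_agree (@gc x) xA.
have [My MyB] := continuous_agree (@gc y) yB.
exists (maxn Mx My) => x' y' xx' yy'; apply: AB; split.
  by apply: MxA; apply: agree_le xx'; apply: leq_maxl.
by apply: MyB; apply: agree_le yy'; apply: leq_maxr.
Qed.

Lemma open_dense_agree_dense O : open O -> dense O -> agree_dense (fun x y => O (g x, g y)).
Proof.
move=> oO dO x y M; have [[a b] [[xa yb] Oab]] : box x y M `&` O !=set0.
  by apply: dO; [exists (g x, g y); apply: box_center|apply: open_box].
by exists (h a), (h b); rewrite !hK.
Qed.

Lemma agree_open_open P : agree_open P -> open [set p : T * T | P (h p.1) (h p.2)].
Proof.
move=> oP; rewrite openE => p /oP [M MP].
suff : nbhs p (box (h p.1) (h p.2) M) by apply: filterS => q [] /MP; apply.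
by apply: open_nbhs_nbhs; split; [apply: open_box|split; apply: agree_refl].
Qed.

Lemma agree_dense_dense P : agree_dense P -> dense [set p : T * T | P (h p.1) (h p.2)].
Proof.
move=> dP O [[a b] Oab] oO.
have Oab' : O (g (h a), g (h b)) by rewrite !hK.
have [M MO] := open_agree_open oO Oab'.
have [x' [y' [xx' yy' Pxy']]] := dP (h a) (h b) M.
by exists (g x', g y'); split; [apply: MO|rewrite /= !gK].
Qed.

Lemma residual_dense (A : set (T * T)) : residual A -> dense A.
Proof.
move=> [U [oU UA]] O [[a b] Oab] oO.
have Oab' : O (g (h a), g (h b)) by rewrite !hK.
have [M MO] := open_agree_open oO Oab'.
have [x' [y' [xx' yy' Uxy']]] := agree_baire
  (fun n => open_agree_open (oU n).1) (fun n => open_dense_agree_dense (oU n).1 (oU n).2)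
  (h a) (h b) M.
by exists (g x', g y'); split; [apply: MO|apply: UA => n _; apply: Uxy'].
Qed.

End Transfer.

Section LimnEsupEinf.
Context {R : realType}.
Local Open Scope ereal_scope.
Implicit Types (u : (\bar R)^nat) (r : \bar R).

Lemma limn_esup_ge u r :
  (forall N, exists2 m, (N <= m)%N & r <= u m) -> r <= limn_esup u.
Proof.
move=> ru; rewrite limn_esup_lim; apply: lime_ge; first exact: is_cvg_esups.
apply: nearW => N; have [m Nm rm] := ru N.
by apply: le_trans rm _; apply: ereal_sup_ubound; exists m.
Qed.

Lemma limn_esup_le u r : (forall m, u m <= r) -> limn_esup u <= r.
Proof.
move=> ur; rewrite limn_esup_lim; apply: lime_le; first exact: is_cvg_esups.
by apply: nearW => N; apply: ge_ereal_sup => _ [m _ <-]; apply: ur.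
Qed.

Lemma limn_einf_eq0 u : (forall m, 0 <= u m) ->
  (forall e : R, (0 < e)%R -> forall N, exists2 m, (N <= m)%N & u m <= e%:E) ->
  limn_einf u = 0.
Proof.
move=> u_ge0 u_small; rewrite limn_einf_lim; apply/eqP; rewrite eq_le; apply/andP; split.
  apply/lee_addgt0Pr => e e0; rewrite add0e.
  apply: lime_le; first exact: is_cvg_einfs.
  apply: nearW => N; have [m Nm um] := u_small e e0 N.
  by apply: le_trans um; apply: ereal_inf_lbound; exists m.
apply: lime_ge; first exact: is_cvg_einfs.
by apply: nearW => N; apply: le_ereal_inf_tmp => _ [m _ <-]; apply: u_ge0.
Qed.

End LimnEsupEinf.

Section MetricTriangle.
Context {R : realType} {T : metricType R}.
Implicit Types (x y z u w : T).

Lemma mdist_lt_halves z x y (e : R) :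
  mdist z x < e / 2 -> mdist z y < e / 2 -> mdist x y < e.
Proof. by move=> zx zy; have := metric_triangle x z y; rewrite (metric_sym x z); lra. Qed.

Lemma mdist_ge_third u w x y :
  mdist u x < mdist u w / 3 -> mdist w y < mdist u w / 3 -> mdist u w / 3 <= mdist x y.
Proof.
move=> ux wy; have := metric_triangle u x w; have := metric_triangle x y w.
by rewrite (metric_sym y w); lra.
Qed.

End MetricTriangle.

Section ConjugateMap.
Context {R : realType} {T : metricType R} (h : T -> cantor_space) (g : cantor_space -> T).
Hypotheses (hK : cancel h g) (gK : cancel g h) (hc : continuous h) (gc : continuous g).

Let f := g \o step \o h.

Lemma iter_conj n a : iter n f a = g (iter n step (h a)).
Proof. by elim: n => [|n IH] /=; rewrite ?hK // IH /f /= gK. Qed.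

Lemma conj_continuous : continuous f.
Proof.
move=> a; apply: continuous_comp; first exact: hc.
by apply: continuous_comp; [exact: step_continuous|exact: gc].
Qed.

Lemma near_zeros_mdist_lt (e : R) : 0 < e ->
  exists L, forall x y, agree L x zeros -> agree L y zeros -> mdist (g x) (g y) < e.
Proof.
move=> e0; have e20 : 0 < e / 2 by lra.
have [L LP] := continuous_agree (@gc zeros) (nbhsx_ballx (g zeros) _ e20).
exists L => x y xL yL; apply: (@mdist_lt_halves _ _ (g zeros)).
  by have := LP x (agree_sym xL); rewrite ballEmdist.
by have := LP y (agree_sym yL); rewrite ballEmdist.
Qed.

Lemma limn_einf_orbit_dist_eq0 a b :
  (forall n, proximal_at n (h a) (h b)) -> limn_einf (orbit_dist f a b) = 0%E.
Proof.
move=> prox; apply: limn_einf_eq0 => [m|e e0 N]; first by rewrite lee_fin mdist_ge0.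
have [L LP] := near_zeros_mdist_lt e0.
have [m Nm [am bm]] := prox (maxn L N).
exists m; first by apply: leq_trans Nm; apply: leq_maxr.
rewrite /orbit_dist !iter_conj lee_fin; apply/ltW/LP.
  by apply: agree_le am; apply: leq_maxl.
by apply: agree_le bm; apply: leq_maxl.
Qed.

Lemma limn_esup_orbit_dist_gt0 a b :
  (forall n, apart_at n (h a) (h b)) -> (0 < limn_esup (orbit_dist f a b))%E.
Proof.
move=> apart; have [K [J [w [aE _]]]] := apart 0%N.
pose r := mdist (g (state J J ones)) (g zeros).
have r3 : 0 < r / 3.
  rewrite divr_gt0 // mdist_gt0; apply/eqP => /(can_inj gK).
  exact: state_neq_zeros.
have [L1 L1P] := continuous_agree (@gc (state J J ones)) (nbhsx_ballx _ _ r3).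
have [L2 L2P] := continuous_agree (@gc zeros) (nbhsx_ballx _ _ r3).
apply: (@lt_le_trans _ _ (r / 3)%:E); first by rewrite lte_fin.
apply: limn_esup_ge => N.
have [K' [J' [w' [aE' [m Nm [am bm]]]]]] := apart (maxn (maxn L1 L2) N).
have [_ JJ' _] := state_inj (etrans (esym aE) aE'); subst J'.
have am1 : agree L1 (iter m step (h a)) (state J J ones) by apply: agree_le am; lia.
have bm2 : agree L2 (iter m step (h b)) zeros by apply: agree_le bm; lia.
exists m; first by apply: leq_trans Nm; apply: leq_maxr.
rewrite /orbit_dist !iter_conj lee_fin; apply: mdist_ge_third.
  by have := L1P _ (agree_sym am1); rewrite ballEmdist.
by have := L2P _ (agree_sym bm2); rewrite ballEmdist.
Qed.

Lemma conj_generically_chaotic : generically_chaotic f.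
Proof.
exists (fun n => [set p | proximal_at n (h p.1) (h p.2)] `&` [set p | apart_at n (h p.1) (h p.2)]).
split=> [n|[a b] abU].
  have oprox := agree_open_open hc (@proximal_at_open n).
  have osep := agree_open_open hc (@apart_at_open n).
  split; first exact: openI.
  apply: denseI => //; apply: (agree_dense_dense hK gK gc).
    exact: proximal_at_dense.
  exact: apart_at_dense.
by split; [apply: limn_einf_orbit_dist_eq0|apply: limn_esup_orbit_dist_gt0] => n;
  have [] := abU n I.
Qed.

Lemma conj_not_generically_eps_chaotic (eps : R) : 0 < eps -> ~ generically_eps_chaotic eps f.
Proof.
move=> eps0 /(residual_dense hK gK hc gc) dense_scrambled.
have [L LP] := near_zeros_mdist_lt eps0.
pose u := state L L ones.
have box_ne : box h u u (L.+1 + L.+1) !=set0 by exists (g u, g u); apply: box_center.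
have box_open : open (box h u u (L.+1 + L.+1)) by apply: open_box.
have [[a b] [[ua ub] [_ sup_gt]]] := dense_scrambled _ box_ne box_open.
have [wa aE] := agree_stateP ua; have [wb bE] := agree_stateP ub.
move: sup_gt; apply/negP; rewrite -leNgt; apply: limn_esup_le => m.
rewrite /orbit_dist !iter_conj /= aE bE lee_fin; apply/ltW/LP; exact: agree_iter_step_zeros.
Qed.

End ConjugateMap.

Theorem proposition37 (R : realType) (T : metricType R) :
  homeomorphic T cantor_space ->
  exists f : T -> T, continuous f /\ generically_chaotic f /\
    (forall eps : R, 0 < eps -> ~ generically_eps_chaotic eps f).
Proof.
move=> [h [g [hK [gK [hc gc]]]]].
exists (g \o step \o h); split; first exact: conj_continuous.
split; first exact: conj_generically_chaotic.
exact: conj_not_generically_eps_chaotic.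
Qed.
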